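(* Let $\Sigma$ be an alphabet and $(C_1,\dots,C_K)$ a graph-induced covering of the full shift $\Sigma^{\mathbb Z}$. Then: (A) it is a memory covering if and only if every graph presentation of it is complete; (B) if it is a memory covering and non-redundant, then every graph presentation of it is complete and deterministic; (C) it is a future covering if and only if every graph presentation of it is co-complete; (D) if it is a future covering and non-redundant, then every graph presentation of it is co-complete and co-deterministic.
   Context: $\Sigma^{\mathbb Z}$: bi-infinite sequences $\bar z=(z_k)_{k\in\mathbb Z}$, shift $\sigma(\bar z)_k=z_{k+1}$. $\bar z^-=(z_k)_{k\le-1}$, $\bar z^+=(z_k)_{k\ge0}$; $\mathrm{Pre}(A)=\{\bar z^-:\bar z\in A\}$, $\mathrm{Post}(A)=\{\bar z^+:\bar z\in A\}$; for $P$ a set of left-infinite and $F$ a set of right-infinite sequences, $P\cdot F=\{\bar z\in\Sigma^{\mathbb Z}:\bar z^-\in P,\ \bar z^+\in F\}$. A labeled graph is $\mathcal G=(S,E)$, $S$ finite, $E\subseteq S\times S\times\Sigma$, every node having an incoming and an outgoing edge. Bi-infinite walk labeled by $\bar z$: $(e_k)_{k\in\mathbb Z}$ with $e_k=(s_k,s_{k+1},z_k)\in E$, starting at $s_0$; $\mathcal Z(\mathcal G)$, $\mathcal Z(\mathcal G,s)$: labels of all bi-infinite walks / of those starting at $s$. A graph-induced covering of $Z$ is a family $(C_1,\dots,C_K)$ for which some graph $\mathcal G$ with nodes $s_1,\dots,s_K$ (a presentation) has $\mathcal Z(\mathcal G)=Z$ and $C_j=\mathcal Z(\mathcal G,s_j)$;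 non-redundant if $C_i\cap C_j=\emptyset$ for $i\ne j$. It is a memory covering if $C_j=\mathrm{Pre}(C_j)\cdot\mathrm{Post}(Z)$ for all $j$, a future covering if $C_j=\mathrm{Pre}(Z)\cdot\mathrm{Post}(C_j)$ for all $j$. A graph is complete if each node has, for each $i\in\Sigma$, at least one outgoing edge labeled $i$; deterministic if at most one; co-complete (resp. co-deterministic) if each node has, for each $i\in\Sigma$, at least (resp. at most) one incoming edge labeled $i$. *)

From mathcomp Require Import all_boot.
From Stdlib Require Import ZArith.
Set Implicit Arguments. Unset Strict Implicit. Unset Printing Implicit Defensive.
Open Scope Z_scope.

Section Shift.
Variable Sigma : finType.

Definition biseq := Z -> Sigma.
(* left-infinite sequences (z_k)_{k<=-1}, encoded as p n = z_{-(n+1)} *)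
Definition lseq := nat -> Sigma.
Definition rseq := nat -> Sigma.

Definition past (z : biseq) : lseq := fun n => z (- Z.of_nat n - 1).
Definition future (z : biseq) : rseq := fun n => z (Z.of_nat n).

Definition Pre (A : biseq -> Prop) : lseq -> Prop :=
  fun p => exists z, A z /\ past z = p.
Definition Post (A : biseq -> Prop) : rseq -> Prop :=
  fun f => exists z, A z /\ future z = f.
Definition concat (P : lseq -> Prop) (F : rseq -> Prop) : biseq -> Prop :=
  fun z => P (past z) /\ F (future z).

Definition fullshift : biseq -> Prop := fun _ => True.

Definition seteq {T} (A B : T -> Prop) := forall x, A x <-> B x.

(* labeled graph with node set 'I_K: edge s t a  <->  (s,t,a) \in E *)
Record lgraph (K : nat) := LGraph { edge : 'I_K -> 'I_K -> Sigma -> bool }.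

Definition graph_wf K (G : lgraph K) :=
  forall s : 'I_K, (exists t a, edge G t s a) /\ (exists t a, edge G s t a).

Definition walk_from K (G : lgraph K) (z : biseq) (s : 'I_K) :=
  exists st : Z -> 'I_K, st 0 = s /\ forall k, edge G (st k) (st (k + 1)) (z k).

Definition ZG K (G : lgraph K) : biseq -> Prop := fun z => exists s, walk_from G z s.
Definition ZGs K (G : lgraph K) (s : 'I_K) : biseq -> Prop := fun z => walk_from G z s.

Definition presentation K (Zs : biseq -> Prop) (C : 'I_K -> biseq -> Prop) (G : lgraph K) :=
  graph_wf G /\ seteq (ZG G) Zs /\ forall j, seteq (C j) (ZGs G j).

Definition graph_induced_covering K (Zs : biseq -> Prop) (C : 'I_K -> biseq -> Prop) :=
  exists G, presentation Zs C G.

Definition non_redundant K (C : 'I_K -> biseq -> Prop) :=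
  forall i j : 'I_K, i <> j -> forall z, ~ (C i z /\ C j z).

Definition memory_covering K (Zs : biseq -> Prop) (C : 'I_K -> biseq -> Prop) :=
  forall j, seteq (C j) (concat (Pre (C j)) (Post Zs)).

Definition future_covering K (Zs : biseq -> Prop) (C : 'I_K -> biseq -> Prop) :=
  forall j, seteq (C j) (concat (Pre Zs) (Post (C j))).

Definition complete K (G : lgraph K) :=
  forall (s : 'I_K) (a : Sigma), exists t, edge G s t a.
Definition deterministic K (G : lgraph K) :=
  forall (s t1 t2 : 'I_K) (a : Sigma), edge G s t1 a -> edge G s t2 a -> t1 = t2.
Definition cocomplete K (G : lgraph K) :=
  forall (t : 'I_K) (a : Sigma), exists s, edge G s t a.
Definition codeterministic K (G : lgraph K) :=
  forall (t s1 s2 : 'I_K) (a : Sigma), edge G s1 t a -> edge G s2 t a -> s1 = s2.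
End Shift.

From mathcomp Require Import all_boot.
From Stdlib Require Import ZArith Lia IndefiniteDescription FunctionalExtensionality.
Set Implicit Arguments. Unset Strict Implicit.
Open Scope Z_scope.

(* A bi-infinite walk is the gluing at time 0 of a backward half-walk (reading
   the past of the label) and a forward half-walk (reading its future), and
   each half only depends on its half of the label.  In a well-formed graph
   every node has half-walks in both directions; in a complete graph every
   future can be read forward from every node.  With these facts:
   - memory => complete: a word of C_s with its future replaced by a.a.a...
     still lies in C_s, so the walk reading it leaves s along an a-edge;
   - complete => memory: keep the past of a word of C_s, read any future;
   - memory + non-redundant => deterministic: two a-successors t1 <> t2 of s
     carry words of C_t1 and C_t2 with a common past, so the memory property
     of C_t2 puts the first word in C_t1 /\ C_t2.
   The future-covering half (C), (D) follows by time reversal, which swaps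
   past and future, edges and reversed edges, complete and co-complete. *)

Lemma Z_chain (T : Type) (R : Z -> T -> T -> Prop) :
  (forall k x, exists y, R k x y) ->
  forall x0, exists p : Z -> T, p 0 = x0 /\ forall k, 0 <= k -> R k (p k) (p (k + 1)).
Proof.
move=> total x0.
have [next Hnext] :=
  functional_choice (fun kx y => R kx.1 kx.2 y) (fun kx => total kx.1 kx.2).
pose q := fix q n := if n is m.+1 then next (Z.of_nat m, q m) else x0.
exists (fun k => q (Z.to_nat k)); split=> // k k_ge0.
have -> : Z.to_nat (k + 1) = (Z.to_nat k).+1 by lia.
rewrite /= Z2Nat.id //; exact: (Hnext (k, q (Z.to_nat k))).
Qed.

Section HalfWalks.
Variables (Sigma : finType) (K : nat) (G : lgraph Sigma K).
Implicit Types (z w : biseq Sigma) (s t : 'I_K).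

Lemma past_eq z w : past z = past w -> forall k, k < 0 -> z k = w k.
Proof.
move=> e k k_lt0; have := f_equal (fun p => p (Z.to_nat (- k - 1))) e.
have e' : - (- k - 1) - 1 = k by lia.
by rewrite /past /= Z2Nat.id ?e' //; lia.
Qed.

Lemma future_eq z w : future z = future w -> forall k, 0 <= k -> z k = w k.
Proof.
move=> e k k_ge0; have := f_equal (fun f => f (Z.to_nat k)) e.
by rewrite /future /= Z2Nat.id.
Qed.

Definition splice z w : biseq Sigma := fun k => if k <? 0 then z k else w k.

Lemma past_splice z w : past (splice z w) = past z.
Proof.
apply: functional_extensionality => n.
by rewrite /past /splice (proj2 (Z.ltb_lt _ _)) //; lia.
Qed.

Lemma future_splice z w : future (splice z w) = future w.
Proof.
apply: functional_extensionality => n.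
by rewrite /future /splice (proj2 (Z.ltb_ge _ _)) //; lia.
Qed.

Definition fwd_walk z s := exists st : Z -> 'I_K,
  st 0 = s /\ forall k, 0 <= k -> edge G (st k) (st (k + 1)) (z k).
Definition bwd_walk z s := exists st : Z -> 'I_K,
  st 0 = s /\ forall k, k < 0 -> edge G (st k) (st (k + 1)) (z k).

Lemma walk_fromE z s : walk_from G z s <-> bwd_walk z s /\ fwd_walk z s.
Proof.
split=> [[st [st0 hst]] | [[sb [sb0 hb]] [sf [sf0 hf]]]]; first by split; exists st.
exists (fun k => if k <? 0 then sb k else sf k); split; first by rewrite /= sf0.
move=> k; case: (Z.ltb_spec k 0) => k0; case: (Z.ltb_spec (k + 1) 0) => k1.
- exact: hb.
- have e : k + 1 = 0 by lia.
  by move: (hb k k0); rewrite e sb0 sf0.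
- lia.
- exact: hf.
Qed.

Lemma fwd_walk_future z w s : future z = future w -> fwd_walk z s -> fwd_walk w s.
Proof.
move=> e [st [st0 hst]]; exists st; split=> // k k_ge0.
rewrite -(future_eq e k_ge0); exact: hst.
Qed.

Lemma bwd_walk_past z w s : past z = past w -> bwd_walk z s -> bwd_walk w s.
Proof.
move=> e [st [st0 hst]]; exists st; split=> // k k_lt0.
rewrite -(past_eq e k_lt0); exact: hst.
Qed.

Lemma complete_fwd_walk : complete G -> forall z s, fwd_walk z s.
Proof.
move=> comp z s.
have [st [st0 hst]] :=
  @Z_chain _ (fun k u v => edge G u v (z k)) (fun k u => comp u (z k)) s.
by exists st.
Qed.

Lemma wf_fwd_walk : graph_wf G -> forall s, exists z, fwd_walk z s.
Proof.
move=> wf s; have [_ [_ [a _]]] := wf s.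
have succ (k : Z) (x : 'I_K * Sigma) : exists y : 'I_K * Sigma, edge G x.1 y.1 y.2.
  by have [_ [v [b e]]] := wf x.1; exists (v, b).
have [p [p0 hp]] := Z_chain succ (s, a).
exists (fun k => (p (k + 1)).2), (fun k => (p k).1); split; first by rewrite p0.
exact: hp.
Qed.

Lemma wf_bwd_walk : graph_wf G -> forall s, exists z, bwd_walk z s.
Proof.
move=> wf s; have [[_ [a _]] _] := wf s.
have pred (k : Z) (x : 'I_K * Sigma) : exists y : 'I_K * Sigma, edge G y.1 x.1 y.2.
  by have [[v [b e]] _] := wf x.1; exists (v, b).
have [p [p0 hp]] := Z_chain pred (s, a).
exists (fun k => (p (- k)).2), (fun k => (p (- k)).1); split; first by rewrite p0.
move=> k k_lt0; have e1 : - k - 1 + 1 = - k by lia.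
have e2 : - (k + 1) = - k - 1 by lia.
by have := hp (- k - 1) ltac:(lia); rewrite e1 e2.
Qed.

Lemma extend_bwd_walk z s :
  graph_wf G -> bwd_walk z s -> exists u, walk_from G u s /\ past u = past z.
Proof.
move=> wf hb; have [w hf] := wf_fwd_walk wf s.
exists (splice z w); split; last exact: past_splice.
apply/walk_fromE; split.
- by apply: bwd_walk_past hb; rewrite past_splice.
- by apply: fwd_walk_future hf; rewrite future_splice.
Qed.

Definition extend_past z (a : Sigma) : biseq Sigma :=
  fun k => if k <? -1 then z (k + 1) else a.

Lemma bwd_walk_extend z s t a :
  bwd_walk z s -> edge G s t a -> bwd_walk (extend_past z a) t.
Proof.
move=> [st [st0 hst]] e_st.
exists (fun k => if k =? 0 then t else st (k + 1)); split=> // k k_lt0.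
rewrite /extend_past; case: (Z.eqb_spec k (-1)) => [-> /= | k_ne]; first by rewrite st0.
have -> : (k =? 0) = false by apply/Z.eqb_neq; lia.
have -> : (k + 1 =? 0) = false by apply/Z.eqb_neq; lia.
have -> : (k <? -1) = true by apply/Z.ltb_lt; lia.
by have := hst (k + 1) ltac:(lia).
Qed.

End HalfWalks.

Section MemoryCoverings.
Variables (Sigma : finType) (K : nat) (C : 'I_K -> biseq Sigma -> Prop).
Variable G : lgraph Sigma K.
Hypothesis pres : presentation (@fullshift Sigma) C G.

(* Memory coverings of the full shift have complete presentations: a word of
   C_s with future a.a.a... stays in C_s by the memory property. *)
Lemma memory_complete : memory_covering (@fullshift Sigma) C -> complete G.
Proof.
move=> mem s a; case: pres => wf [_ hC].
have [zb hb] := wf_bwd_walk wf s.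
have [u [hu _]] := extend_bwd_walk wf hb.
have : C s (splice u (fun _ => a)).
  apply/mem; split; last by exists (splice u (fun _ => a)).
  by exists u; split; [apply/hC | rewrite past_splice].
case/hC => st [st0 hst]; exists (st 1); rewrite -st0; exact: hst 0.
Qed.

(* Conversely, a complete presentation makes each C_j depend only on the
   past: keep the backward half of a walk and read any future forward. *)
Lemma complete_memory : complete G -> memory_covering (@fullshift Sigma) C.
Proof.
move=> comp j z; split=> [Cz | [[w [Cw pw]] _]]; first by split; exists z.
case: pres => _ [_ hC].
have /walk_fromE [hbw _] := proj1 (hC j w) Cw.
apply/hC/walk_fromE; split; first exact: bwd_walk_past hbw.
exact: complete_fwd_walk.
Qed.

Lemma memory_deterministic :
  memory_covering (@fullshift Sigma) C -> non_redundant C -> deterministic G.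
Proof.
move=> mem nr s t1 t2 a e1 e2; case: (eqVneq t1 t2) => // /eqP t1_neq_t2.
case: pres => wf [_ hC].
have [zb hb] := wf_bwd_walk wf s.
have word_at t : edge G s t a -> exists u, C t u /\ past u = past (extend_past zb a).
  move=> e; have [u [hu pu]] := extend_bwd_walk wf (bwd_walk_extend hb e).
  by exists u; split; first apply/hC.
have [u1 [Cu1 p1]] := word_at t1 e1; have [u2 [Cu2 p2]] := word_at t2 e2.
exfalso; apply: (nr t1 t2 t1_neq_t2 u1); split=> //.
apply/mem; split; last by exists u1.
by exists u2; rewrite p1 p2.
Qed.

End MemoryCoverings.

Lemma memory_iff_complete (Sigma : finType) K (C : 'I_K -> biseq Sigma -> Prop) G0 :
  presentation (@fullshift Sigma) C G0 ->
  memory_covering (@fullshift Sigma) C <->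
  (forall G, presentation (@fullshift Sigma) C G -> complete G).
Proof.
move=> pres0; split=> [mem G pres | all_complete].
- exact: memory_complete pres mem.
- exact: complete_memory pres0 (all_complete G0 pres0).
Qed.

Lemma memory_complete_deterministic (Sigma : finType) K (C : 'I_K -> biseq Sigma -> Prop) :
  memory_covering (@fullshift Sigma) C -> non_redundant C ->
  forall G, presentation (@fullshift Sigma) C G -> complete G /\ deterministic G.
Proof.
move=> mem nr G pres; split; [exact: memory_complete pres mem | exact: memory_deterministic pres mem nr].
Qed.

Section TimeReversal.
Variable Sigma : finType.
Implicit Types (z : biseq Sigma) (A : biseq Sigma -> Prop).

(* Time reversal of sequences, graphs and coverings.  Reversing a graph turns
   complete into co-complete and deterministic into co-deterministic by
   definition (the two predicates are convertible). *)
Definition rev_seq z : biseq Sigma := fun k => z (- k - 1).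
Definition rev_graph K (G : lgraph Sigma K) : lgraph Sigma K :=
  LGraph (fun s t a => edge G t s a).
Definition rev_cov K (C : 'I_K -> biseq Sigma -> Prop) : 'I_K -> biseq Sigma -> Prop :=
  fun j z => C j (rev_seq z).

Lemma rev_seqK : involutive rev_seq.
Proof.
move=> z; apply: functional_extensionality => k.
by rewrite /rev_seq; have -> : - (- k - 1) - 1 = k by lia.
Qed.

Lemma rev_graphK K : involutive (@rev_graph K).
Proof. by case. Qed.

Lemma rev_covK K (C : 'I_K -> biseq Sigma -> Prop) : rev_cov (rev_cov C) = C.
Proof.
apply: functional_extensionality => j; apply: functional_extensionality => z.
by rewrite /rev_cov rev_seqK.
Qed.

Lemma past_rev z : past (rev_seq z) = future z.
Proof.
apply: functional_extensionality => n.
by rewrite /past /future /rev_seq; have -> : - (- Z.of_nat n - 1) - 1 = Z.of_nat n by lia.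
Qed.

Lemma future_rev z : future (rev_seq z) = past z.
Proof. by rewrite -{2}(rev_seqK z) past_rev. Qed.

Lemma Pre_rev A p : Pre (fun z => A (rev_seq z)) p <-> Post A p.
Proof.
split=> [[z [Az pz]] | [z [Az fz]]].
- by exists (rev_seq z); rewrite future_rev.
- by exists (rev_seq z); rewrite rev_seqK past_rev.
Qed.

Lemma Post_rev A p : Post (fun z => A (rev_seq z)) p <-> Pre A p.
Proof.
split=> [[z [Az fz]] | [z [Az pz]]].
- by exists (rev_seq z); rewrite past_rev.
- by exists (rev_seq z); rewrite rev_seqK future_rev.
Qed.

Lemma walk_from_rev K (G : lgraph Sigma K) z s :
  walk_from G z s -> walk_from (rev_graph G) (rev_seq z) s.
Proof.
move=> [st [st0 hst]]; exists (fun k => st (- k)); split=> // k.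
have e1 : - k - 1 + 1 = - k by lia.
have e2 : - (k + 1) = - k - 1 by lia.
by have := hst (- k - 1); rewrite /rev_seq /= e1 e2.
Qed.

Lemma walk_from_revE K (G : lgraph Sigma K) z s :
  walk_from (rev_graph G) z s <-> walk_from G (rev_seq z) s.
Proof.
split=> /walk_from_rev; [by rewrite rev_graphK | by rewrite rev_seqK].
Qed.

Lemma presentation_rev K (C : 'I_K -> biseq Sigma -> Prop) G :
  presentation (@fullshift Sigma) C G ->
  presentation (@fullshift Sigma) (rev_cov C) (rev_graph G).
Proof.
case=> wf [cover hC]; split; last split.
- move=> s; have [[t [a e]] [t' [a' e']]] := wf s.
  by split; [exists t', a' | exists t, a].
- move=> z; split=> // _; have [s hs] := proj2 (cover (rev_seq z)) I.
  by exists s; apply/walk_from_revE.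
- move=> j z; exact: iff_trans (hC j (rev_seq z)) (iff_sym (walk_from_revE G z j)).
Qed.

Lemma presentation_revE K (C : 'I_K -> biseq Sigma -> Prop) G :
  presentation (@fullshift Sigma) (rev_cov C) G <->
  presentation (@fullshift Sigma) C (rev_graph G).
Proof.
split=> /presentation_rev; [by rewrite rev_covK | by rewrite rev_graphK].
Qed.

Lemma presentations_rev K (C : 'I_K -> biseq Sigma -> Prop) (P : lgraph Sigma K -> Prop) :
  (forall G, presentation (@fullshift Sigma) (rev_cov C) G -> P G) <->
  (forall G, presentation (@fullshift Sigma) C G -> P (rev_graph G)).
Proof.
split=> all_P G pres; first exact/all_P/presentation_rev.
by rewrite -(rev_graphK G); apply/all_P/presentation_revE.
Qed.

Lemma non_redundant_rev K (C : 'I_K -> biseq Sigma -> Prop) :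
  non_redundant C -> non_redundant (rev_cov C).
Proof. by move=> nr i j ne z; apply: nr ne (rev_seq z). Qed.

Lemma memory_covering_rev K (C : 'I_K -> biseq Sigma -> Prop) :
  memory_covering (@fullshift Sigma) (rev_cov C) <-> future_covering (@fullshift Sigma) C.
Proof.
have reversed j z :
    (rev_cov C j z <-> concat (Pre (rev_cov C j)) (Post (@fullshift Sigma)) z) <->
    (C j (rev_seq z) <-> concat (Pre (@fullshift Sigma)) (Post (C j)) (rev_seq z)).
  rewrite /concat past_rev future_rev /rev_cov.
  have := Pre_rev (C j) (past z).
  have : Post (@fullshift Sigma) (future z) <-> Pre (@fullshift Sigma) (future z).
    exact: Post_rev.
  tauto.
split=> cov j z.
- rewrite -(rev_seqK z); exact: (proj1 (reversed j (rev_seq z)) (cov j _)).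
- exact: (proj2 (reversed j z) (cov j _)).
Qed.

End TimeReversal.

Theorem mainTheorem8 (Sigma : finType) (K : nat) (C : 'I_K -> biseq Sigma -> Prop) :
  graph_induced_covering (@fullshift Sigma) C ->
  (memory_covering (@fullshift Sigma) C <->
     (forall G : lgraph Sigma K, presentation (@fullshift Sigma) C G -> complete G)) /\
  (memory_covering (@fullshift Sigma) C -> non_redundant C ->
     forall G : lgraph Sigma K, presentation (@fullshift Sigma) C G ->
       complete G /\ deterministic G) /\
  (future_covering (@fullshift Sigma) C <->
     (forall G : lgraph Sigma K, presentation (@fullshift Sigma) C G -> cocomplete G)) /\
  (future_covering (@fullshift Sigma) C -> non_redundant C ->
     forall G : lgraph Sigma K, presentation (@fullshift Sigma) C G ->
       cocomplete G /\ codeterministic G).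
Proof.
move=> [G0 pres0]; split; last split; last split.
- exact: memory_iff_complete pres0.
- exact: memory_complete_deterministic.
- (* (C) is (A) for the reversed covering, presented by the reversed graph *)
  apply: iff_trans (iff_sym (memory_covering_rev C)) _.
  apply: iff_trans (memory_iff_complete (presentation_rev pres0)) _.
  exact: presentations_rev C (@complete Sigma K).
- (* (D) is (B) for the reversed covering *)
  move=> fut nr.
  apply: (proj1 (presentations_rev C (fun G => complete G /\ deterministic G))).
  apply: memory_complete_deterministic (non_redundant_rev nr).
  exact/memory_covering_rev.
Qed.
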